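(* Let $M>0$, let $f:[0,1]\to\mathbb{R}$ satisfy $|f(x)-f(y)|\le M|x-y|$ for all $x,y\in[0,1]$, and let $g(x)=f(x)\bmod 1\in[0,1)$. Let $n\ge 2$ be an integer and $x_i=\frac{i-1}{n-1}$ for $i=1,\dots,n$. Let $\delta\in[0,1/2]$ and let $\hat g:[0,1]\to[0,1)$ satisfy $d_w(\hat g(x_i),g(x_i))\le\delta$ for all $i$. For each $i$ let $\eta_i\in[-\delta,\delta]$ be such that $\hat g(x_i)=(f(x_i)+\eta_i)\bmod 1$, and set $\hat f(x_i):=f(x_i)+\eta_i$. If $2\delta+\frac{M}{n-1}<\frac12$, then for each $i=2,\dots,n$: $$\hat f(x_i)-\hat f(x_{i-1})=\begin{cases}\hat g(x_i)-\hat g(x_{i-1}) & \text{if } |\hat g(x_i)-\hat g(x_{i-1})|<1/2,\\ 1+\hat g(x_i)-\hat g(x_{i-1}) & \text{if } \hat g(x_i)-\hat g(x_{i-1})<-1/2,\\ -1+\hat g(x_i)-\hat g(x_{i-1}) & \text{if } \hat g(x_i)-\hat g(x_{i-1})>1/2.\end{cases}$$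
   Context: For $a\in\mathbb{R}$, $a\bmod 1\in[0,1)$ denotes $a-\lfloor a\rfloor$. The wrap-around distance on $[0,1)$ is $d_w(a,b)=\min(|a-b|,1-|a-b|)$. *)

From Stdlib Require Export Reals.
Open Scope R_scope.

(* a mod 1 = a - floor a ; Int_part a = up a - 1 is the floor of a. *)
Definition mod1 (a : R) : R := a - IZR (Int_part a).

Definition dw (a b : R) : R := Rmin (Rabs (a - b)) (1 - Rabs (a - b)).

Definition grid (n i : nat) : R := INR (i - 1) / INR (n - 1).

(* Since ghat(x_j) = fhat_j mod 1, the difference
   fhat_i - fhat_(i-1) differs from D = ghat(x_i) - ghat(x_(i-1)) by an integer.
   The Lipschitz bound on the grid step and |eta_j| <= delta give
   |fhat_i - fhat_(i-1)| <= M/(n-1) + 2 delta < 1/2, while D lies in (-1, 1);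
   the position of D relative to +-1/2 then pins that integer down to 0, 1 or -1. *)

From Stdlib Require Import Reals Lra Lia.
Open Scope R_scope.

Lemma mod1_range (a : R) : 0 <= mod1 a < 1.
Proof. unfold mod1; pose proof (base_Int_part a); lra. Qed.

Lemma sub_mod1_sub (a b : R) :
  a - b - (mod1 a - mod1 b) = IZR (Int_part a - Int_part b).
Proof. unfold mod1; rewrite minus_IZR; ring. Qed.

Lemma IZR_eq_of_dist_lt_1 (k z : Z) : Rabs (IZR k - IZR z) < 1 -> k = z.
Proof.
  intros Hkz; apply Rabs_def2 in Hkz; rewrite <- minus_IZR in Hkz.
  assert (k - z = 0)%Z by (apply one_IZR_lt1; lra).
  lia.
Qed.

Lemma unwrap_sub_mod1 (a b : R) :
  Rabs (a - b) < 1/2 ->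
  let D := mod1 a - mod1 b in
  (Rabs D < 1/2 -> a - b = D) /\
  (D < - (1/2) -> a - b = 1 + D) /\
  (D > 1/2 -> a - b = -1 + D).
Proof.
  intros Hab D.
  pose proof (sub_mod1_sub a b) as Hk; fold D in Hk.
  set (k := (Int_part a - Int_part b)%Z) in Hk.
  assert (HD1 : -1 < D < 1)
    by (unfold D; pose proof (mod1_range a); pose proof (mod1_range b); lra).
  apply Rabs_def2 in Hab.
  split; [|split]; intros HD.
  - apply Rabs_def2 in HD.
    assert (k = 0%Z) as Hk0 by (apply IZR_eq_of_dist_lt_1, Rabs_def1; simpl; lra).
    rewrite Hk0 in Hk; simpl in Hk; lra.
  - assert (k = 1%Z) as Hk1 by (apply IZR_eq_of_dist_lt_1, Rabs_def1; simpl; lra).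
    rewrite Hk1 in Hk; simpl in Hk; lra.
  - assert (k = (-1)%Z) as Hk1 by (apply IZR_eq_of_dist_lt_1, Rabs_def1; simpl; lra).
    rewrite Hk1 in Hk; simpl in Hk; lra.
Qed.

Lemma grid_in_unit (n i : nat) :
  (1 <= i <= n)%nat -> (2 <= n)%nat -> 0 <= grid n i <= 1.
Proof.
  intros Hi Hn; unfold grid.
  assert (0 < INR (n - 1)) by (apply lt_0_INR; lia).
  assert (INR (i - 1) <= INR (n - 1)) by (apply le_INR; lia).
  pose proof (pos_INR (i - 1)).
  split.
  - apply Rmult_le_pos; [lra | apply Rlt_le, Rinv_0_lt_compat; lra].
  - apply (Rmult_le_reg_r (INR (n - 1))); [lra |].
    unfold Rdiv; rewrite Rmult_assoc, Rinv_l by lra; lra.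
Qed.

Lemma grid_step (n i : nat) :
  (2 <= i <= n)%nat -> grid n i - grid n (i - 1) = 1 / INR (n - 1).
Proof.
  intros Hi; unfold grid.
  assert (0 < INR (n - 1)) by (apply lt_0_INR; lia).
  replace (i - 1 - 1)%nat with (i - 2)%nat by lia.
  replace (i - 1)%nat with (S (i - 2)) by lia.
  rewrite S_INR; field; lra.
Qed.

Lemma lipschitz_grid_step (M : R) (f : R -> R) (n i : nat) :
  (forall x y, 0 <= x <= 1 -> 0 <= y <= 1 -> Rabs (f x - f y) <= M * Rabs (x - y)) ->
  (2 <= i <= n)%nat ->
  Rabs (f (grid n i) - f (grid n (i - 1))) <= M / INR (n - 1).
Proof.
  intros Hf Hi.
  assert (0 < INR (n - 1)) by (apply lt_0_INR; lia).
  eapply Rle_trans.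
  - apply Hf; apply grid_in_unit; lia.
  - rewrite grid_step, Rabs_pos_eq by (auto; apply Rlt_le, Rdiv_lt_0_compat; lra).
    right; field; lra.
Qed.

Theorem mainTheorem1
  (M : R) (f : R -> R) (n : nat) (delta : R) (ghat : R -> R) (eta : nat -> R) :
  0 < M ->
  (forall x y, 0 <= x <= 1 -> 0 <= y <= 1 -> Rabs (f x - f y) <= M * Rabs (x - y)) ->
  (2 <= n)%nat ->
  0 <= delta <= 1/2 ->
  (forall x, 0 <= x <= 1 -> 0 <= ghat x < 1) ->
  (forall i, (1 <= i <= n)%nat ->
     dw (ghat (grid n i)) (mod1 (f (grid n i))) <= delta) ->
  (forall i, (1 <= i <= n)%nat ->
     - delta <= eta i <= delta /\
     ghat (grid n i) = mod1 (f (grid n i) + eta i)) ->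
  2 * delta + M / INR (n - 1) < 1/2 ->
  forall i, (2 <= i <= n)%nat ->
    let fhat := fun j => f (grid n j) + eta j in
    let D := ghat (grid n i) - ghat (grid n (i - 1)) in
    (Rabs D < 1/2 -> fhat i - fhat (i - 1)%nat = D) /\
    (D < - (1/2) -> fhat i - fhat (i - 1)%nat = 1 + D) /\
    (D > 1/2 -> fhat i - fhat (i - 1)%nat = -1 + D).
Proof.
  intros _ Hf _ _ _ _ Heta Hsmall i Hi fhat D.
  destruct (Heta i) as [Heta_i Hghat_i]; [lia|].
  destruct (Heta (i - 1)%nat) as [Heta_i1 Hghat_i1]; [lia|].
  assert (Hfhat : Rabs (fhat i - fhat (i - 1)%nat) < 1/2).
  { pose proof (lipschitz_grid_step M f n i Hf Hi).
    assert (Rabs (eta i - eta (i - 1)%nat) <= 2 * delta) by (apply Rabs_le; lra).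
    unfold fhat.
    replace (f (grid n i) + eta i - (f (grid n (i - 1)) + eta (i - 1)%nat))
      with ((f (grid n i) - f (grid n (i - 1))) + (eta i - eta (i - 1)%nat)) by ring.
    eapply Rle_lt_trans; [apply Rabs_triang | lra]. }
  unfold D; rewrite Hghat_i, Hghat_i1.
  exact (unwrap_sub_mod1 (fhat i) (fhat (i - 1)%nat) Hfhat).
Qed.
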